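(* If $G$ is a minimally $1/2$-tough claw-free graph, then every cycle of $G$ has length $3$.
   Context: All graphs are finite, simple and undirected. A graph is claw-free if it contains no induced subgraph isomorphic to $K_{1,3}$. $\omega(H)$ denotes the number of components of $H$. A cutset of $G$ is a vertex set $S$ with $G-S$ disconnected. For positive real $t$, $G$ is $t$-tough if $\omega(G-S)\le |S|/t$ for every cutset $S$; the toughness $\tau(G)$ is the largest such $t$, with $\tau(K_n)=\infty$ for all $n\ge1$. $G$ is minimally $t$-tough if $\tau(G)=t$ and $\tau(G-e)<t$ for every edge $e$ of $G$. *)

From mathcomp Require Import all_boot all_order all_algebra.
Set Implicit Arguments. Unset Strict Implicit. Unset Printing Implicit Defensive.
Import Order.TTheory GRing.Theory Num.Theory.

Section Graphs.
Variable T : finType.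

Definition simple_graph (e : rel T) : Prop :=
  symmetric e /\ irreflexive e.

Definition del_vertices (e : rel T) (S : {set T}) : rel T :=
  fun x y => [&& e x y, x \notin S & y \notin S].

Definition del_edge (e : rel T) (u v : T) : rel T :=
  fun x y => e x y && ~~ (((x == u) && (y == v)) || ((x == v) && (y == u))).

Definition ncomp (e : rel T) (S : {set T}) : nat :=
  #|[set [set y in ~: S | connect (del_vertices e S) x y] | x in ~: S]|.

Definition cutset (e : rel T) (S : {set T}) : bool := 1 < ncomp e S.

(* G is t-tough: omega(G-S) <= |S|/t for every cutset S (t > 0),
   written multiplicatively *)
Definition tough (e : rel T) (t : rat) : Prop :=
  forall S : {set T}, cutset e S -> (t * (ncomp e S)%:R <= (#|S|)%:R)%R.

(* tau(G) = t : t is the largest value for which G is t-tough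
   (never holds for graphs without cutsets, whose toughness is infinite) *)
Definition toughness_is (e : rel T) (t : rat) : Prop :=
  (0 <= t)%R /\ tough e t /\ forall t' : rat, (t < t')%R -> ~ tough e t'.

Definition minimally_tough (e : rel T) (t : rat) : Prop :=
  toughness_is e t /\
  forall u v : T, e u v ->
    exists t' : rat, toughness_is (del_edge e u v) t' /\ (t' < t)%R.

Definition claw_free (e : rel T) : Prop :=
  ~ exists x a b c : T,
      [/\ e x a, e x b & e x c] /\
      [/\ a != b, a != c & b != c] /\
      [/\ ~~ e a b, ~~ e a c & ~~ e b c].

Definition is_graph_cycle (e : rel T) (s : seq T) : bool :=
  [&& 3 <= size s, uniq s & cycle e s].

End Graphs.

From mathcomp Require Import all_boot all_order all_algebra.
From mathcomp Require Import lra.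
Import Order.TTheory GRing.Theory Num.Theory.

Set Implicit Arguments.
Unset Strict Implicit.
Unset Printing Implicit Defensive.

(* Suppose [G] has a cycle [u v p] of length at least 4.  By minimality [G - uv]
   is not 1/2-tough, so some [S] has more than [2|S|] components in [G - uv - S];
   as [G] itself is 1/2-tough, [u] and [v] lie outside [S] in different
   components [K_u] and [K_v].  Charge every component to an adjacent vertex of
   [S] ([G] is connected): [K_v] to the first vertex of [S] met when walking from
   [v] along the cycle away from [u], [K_u] symmetrically, and the others
   arbitrarily.  Claw-freeness lets a vertex of [S] see three components of
   [G - uv - S] only if it sees both [u] and [v], so a vertex could be charged
   three times only if [K_u] and [K_v] were both charged to it through [u] and
   [v], i.e. if the neighbours of [u] and [v] on the cycle coincided.  Hence
   [G - uv - S] has at most [2|S|] components, a contradiction. *)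

Lemma card_bigcup_le (I T : finType) (A : {pred I}) (F : I -> {set T}) :
  #|\bigcup_(i in A) F i| <= \sum_(i in A) #|F i|.
Proof.
elim/big_ind2: _ => [|m X n Y le_Xm le_Yn|]; rewrite ?cards0 //.
by apply: leq_trans (leq_card_setU X Y) _; apply: leq_add.
Qed.

Lemma head_rev (T : Type) (x0 : T) s : head x0 (rev s) = last x0 s.
Proof. by case/lastP: s => // s z; rewrite rev_rcons last_rcons. Qed.

Lemma uniq_head_neq_last (T : eqType) (x0 y0 : T) s :
  uniq s -> 1 < size s -> head x0 s != last y0 s.
Proof.
case: s => [|x [|y s]] //= /andP[x_notin _] _.
by apply: contraNneq x_notin => ->; apply: mem_last.
Qed.

Lemma path_exit (T : Type) (e : rel T) (P : pred T) x p :
  path e x p -> P x -> ~~ P (last x p) ->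
  exists p1 y p2, [/\ p = p1 ++ y :: p2, all P (x :: p1), ~~ P y & e (last x p1) y].
Proof.
elim: p x => [|y p IHp] x /=; first by move=> _ ->.
case/andP=> exy y_p Px Plast; case Py: (P y).
  have [p1 [z [p2 [-> p1P Nz ez]]]] := IHp y y_p Py Plast.
  by exists (y :: p1), z, p2; split => //=; rewrite Px.
by exists [::], y, p; split => //=; rewrite ?Px ?Py.
Qed.

Lemma path_rcons_rev (T : Type) (e : rel T) x y p :
  symmetric e -> path e x (rcons p y) -> path e y (rcons (rev p) x).
Proof.
move=> e_sym; rewrite -(eq_path (e := fun a b => e b a)) => [|a b]; last exact: e_sym.
by rewrite -rev_path last_rcons belast_rcons rev_cons.
Qed.

Lemma path_leaves_through (T : finType) (e : rel T) (K S : {set T}) u v p :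
  path e v (rcons p u) -> u != v -> u \notin p -> v \notin p -> p != [::] ->
  v \in K -> u \notin K ->
  (forall b z, b \in K -> z \notin K -> z \notin S -> e b z -> (b == v) && (z == u)) ->
  exists x b, [/\ x \in S, b \in K, e b x & b = v -> x = head u p].
Proof.
move=> v_path u_v u_p v_p p_nil vK uK K_boundary.
have u_last : last v (rcons p u) \notin K by rewrite last_rcons.
have [p1 [z [p2 [p_eq p1K zK bz]]]] := @path_exit _ _ (fun y => y \in K) _ _ v_path vK u_last.
have bK : last v p1 \in K by apply: (allP p1K); apply: mem_last.
have z_next : last v p1 = v -> z = head u p.
  case: p1 p_eq {p1K bK bz} => [|y p1] p_eq /=; first by move: p_eq; rewrite headI => -[->].
  move=> last_v; have : v \in rcons p u by rewrite p_eq mem_cat -last_v mem_last.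
  by rewrite mem_rcons in_cons eq_sym (negbTE u_v) (negbTE v_p).
have [zS | zNS] := boolP (z \in S); first by exists z, (last v p1).
case/andP: (K_boundary _ _ bK zK zNS bz) => /eqP/z_next-> /eqP head_u.
case/negP: u_p; rewrite -{1}head_u.
by case: (p) p_nil => //= y q _; apply: mem_head.
Qed.

Lemma claw_free_nbrs (T : finType) (e : rel T) x a b c :
  claw_free e -> e x a -> e x b -> e x c -> a != b -> a != c -> b != c ->
  [|| e a b, e a c | e b c].
Proof.
move=> e_claw_free xa xb xc ab ac bc.
apply: contraT => /norP[nab /norP[nac nbc]]; exfalso; apply: e_claw_free.
by exists x, a, b, c.
Qed.

Section Components.
Variables (T : finType) (e : rel T).
Implicit Types (S : {set T}) (x y : T).

Definition component (S : {set T}) (x : T) : {set T} :=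
  [set y in ~: S | connect (del_vertices e S) x y].

Lemma ncompE S : ncomp e S = #|[set component S x | x in ~: S]|.
Proof. by []. Qed.

Lemma mem_component S x y :
  (y \in component S x) = (y \notin S) && connect (del_vertices e S) x y.
Proof. by rewrite inE in_setC. Qed.

Lemma component_refl S x : x \notin S -> x \in component S x.
Proof. by move=> xS; rewrite mem_component xS connect0. Qed.

Lemma component_notin S x y : y \in component S x -> y \notin S.
Proof. by rewrite mem_component => /andP[]. Qed.

Hypothesis e_sym : symmetric e.

Lemma del_vertices_sym S : symmetric (del_vertices e S).
Proof. by move=> x y; rewrite /del_vertices e_sym; congr (_ && _); apply: andbC. Qed.

Lemma component_eq S x y : y \in component S x -> component S y = component S x.
Proof.
rewrite mem_component => /andP[_ xy]; apply/setP => z; rewrite !mem_component.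
have sym := sym_connect_sym (del_vertices_sym S).
by rewrite (same_connect sym xy).
Qed.

Lemma component_edge S x y :
  x \notin S -> y \notin S -> e x y -> component S x = component S y.
Proof.
move=> xS yS xy; apply/esym/component_eq.
by rewrite mem_component yS connect1 // /del_vertices xy xS.
Qed.

End Components.

Lemma eq_ncomp (T : finType) (e1 e2 : rel T) S :
  connect (del_vertices e1 S) =2 connect (del_vertices e2 S) -> ncomp e1 S = ncomp e2 S.
Proof.
move=> eq_connect; have eq_component : component e1 S =1 component e2 S.
  by move=> x; apply/setP => y; rewrite !mem_component eq_connect.
by rewrite !ncompE (eq_imset _ eq_component).
Qed.

Lemma tough_halfP (T : finType) (e : rel T) :
  tough e (1 / 2)%R <-> forall S, cutset e S -> ncomp e S <= 2 * #|S|.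
Proof.
split=> e_tough S /e_tough; rewrite -(ler_nat rat) natrM => le_S; lra.
Qed.

Lemma not_tough_half_cutset (T : finType) (e : rel T) :
  ~ tough e (1 / 2)%R -> exists2 S, cutset e S & 2 * #|S| < ncomp e S.
Proof.
move=> e_not_tough.
case: (pickP (fun S => cutset e S && (2 * #|S| < ncomp e S))) => [S /andP[]|none].
  by exists S.
case: e_not_tough; apply/tough_halfP => S S_cut.
by move: (none S); rewrite S_cut /= => /negbT; rewrite -leqNgt.
Qed.

Lemma minimally_tough_del_edge (T : finType) (e : rel T) t u v :
  minimally_tough e t -> e u v -> ~ tough (del_edge e u v) t.
Proof. by move=> [_ e_min] /e_min[t' [[_ [_ t'_max]] /t'_max]]. Qed.

Lemma tough_connected (T : finType) (e : rel T) (t : rat) :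
  (0 < t)%R -> tough e t -> forall x y, connect e x y.
Proof.
move=> t_gt0 e_tough x y.
have : ncomp e set0 <= 1.
  rewrite leqNgt; apply/negP => set0_cut.
  have := e_tough set0 set0_cut; rewrite cards0 leNgt => /negP; apply.
  by rewrite mulr_gt0 // ltr0n (leq_trans _ set0_cut).
have notin0 z : z \notin (set0 : {set T}) by rewrite in_set0.
have inC0 z : z \in ~: (set0 : {set T}) by rewrite in_setC notin0.
rewrite ncompE => /card_le1_eqP /(_ _ _ (imset_f _ (inC0 x)) (imset_f _ (inC0 y))) Cxy.
have := component_refl e (notin0 y); rewrite Cxy mem_component => /andP[_].
by apply: connect_sub => a b /andP[ab _]; apply: connect1.
Qed.

Section DeletedEdge.
Variables (T : finType) (e : rel T) (u v : T).
Hypothesis e_sym : symmetric e.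
Implicit Types (S : {set T}) (x y b z : T).

Definition same_edge (x y : T) : bool :=
  ((x == u) && (y == v)) || ((x == v) && (y == u)).

Local Notation h := (del_edge e u v).

Lemma del_edge_sym : symmetric h.
Proof.
move=> x y; rewrite /del_edge e_sym orbC.
by congr (_ && ~~ (_ || _)); apply: andbC.
Qed.

Lemma connect_del_edge S :
  [|| u \in S, v \in S | connect (del_vertices h S) u v] ->
  connect (del_vertices h S) =2 connect (del_vertices e S).
Proof.
move=> uv_joined x0 y0; apply/idP/idP; apply: connect_sub => x y.
  by case/and3P=> /andP[xy _] xS yS; apply: connect1; rewrite /del_vertices xy xS.
case/and3P=> xy xS yS; have [xy_uv | xy_h] := boolP (same_edge x y); last first.
  by apply: connect1; rewrite /del_vertices xS yS !andbT /del_edge xy.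
have sym := sym_connect_sym (del_vertices_sym del_edge_sym S).
case/orP: xy_uv => /andP[/eqP x_u /eqP y_v]; subst x y;
  move: uv_joined; rewrite (negbTE xS) (negbTE yS) /= => joined //.
by rewrite sym.
Qed.

Lemma ncomp_del_edge S :
  [|| u \in S, v \in S | connect (del_vertices h S) u v] -> ncomp h S = ncomp e S.
Proof. by move/connect_del_edge; apply: eq_ncomp. Qed.

Lemma component_del_edge_adj S x y :
  x \notin S -> y \notin S -> e x y ->
  component h S x != component h S y -> same_edge x y.
Proof.
move=> xS yS xy; apply: contraR => xy_h.
by rewrite (component_edge del_edge_sym xS yS) // /del_edge xy xy_h.
Qed.

Lemma component_boundary S x y b z :
  same_edge x y -> b \in component h S x -> z \notin component h S x ->
  z \notin S -> e b z -> (b == x) && (z == y).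
Proof.
move=> xy bx zx zS bz.
have z_neq_x : z != x by apply: contraNneq zx => z_x; rewrite -z_x component_refl.
have : component h S b != component h S z.
  by rewrite (component_eq del_edge_sym bx); apply: contraNneq zx => ->; apply: component_refl.
move/(component_del_edge_adj (component_notin bx) zS bz) => bz_uv; move: bz_uv z_neq_x.
by case/orP: xy => /andP[/eqP-> /eqP->] /orP[] /andP[/eqP-> /eqP->]; rewrite ?eqxx.
Qed.

Lemma claw_free_components S x c1 c2 c3 :
  claw_free e -> c1 \notin S -> c2 \notin S -> c3 \notin S ->
  e x c1 -> e x c2 -> e x c3 -> component h S c1 != component h S c2 ->
  component h S c1 != component h S c3 -> component h S c2 != component h S c3 ->
  [|| same_edge c1 c2, same_edge c1 c3 | same_edge c2 c3].
Proof.
move=> e_claw_free S1 S2 S3 xc1 xc2 xc3 n12 n13 n23.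
have neq c c' : component h S c != component h S c' -> c != c' by apply: contraNneq => ->.
have := claw_free_nbrs e_claw_free xc1 xc2 xc3 (neq _ _ n12) (neq _ _ n13) (neq _ _ n23).
case/or3P => [c12|c13|c23].
- by rewrite (component_del_edge_adj S1 S2 c12 n12).
- by rewrite (component_del_edge_adj S1 S3 c13 n13) orbT.
- by rewrite (component_del_edge_adj S2 S3 c23 n23) !orbT.
Qed.

End DeletedEdge.

Section DeficientCut.
Variables (T : finType) (e : rel T) (u v : T) (S : {set T}).
Hypotheses (e_sym : symmetric e) (e_claw_free : claw_free e).
Hypothesis e_connected : forall x y, connect e x y.
Local Notation C := (component (del_edge e u v) S).
Let h_sym : symmetric (del_edge e u v) := del_edge_sym u v e_sym.

Hypothesis Cu_neq_Cv : C u != C v.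
Variables (x1 x2 a b : T).
Hypotheses (x1S : x1 \in S) (a_Cu : a \in C u) (a_x1 : e a x1).
Hypotheses (x2S : x2 \in S) (b_Cv : b \in C v) (b_x2 : e b x2).
Hypothesis not_charged_through_uv : x1 = x2 -> a = u -> b = v -> False.

Let Ca : C a = C u := component_eq h_sym a_Cu.
Let Cb : C b = C v := component_eq h_sym b_Cv.

Let charged x := [set K in [set C c | c in ~: S & e x c] |
  ((K == C u) ==> (x == x1)) && ((K == C v) ==> (x == x2))].

Lemma charged_nbr x K : K \in charged x -> exists2 c, (c \notin S) && e x c & K = C c.
Proof. by rewrite inE => /andP[/imsetP[c]]; rewrite !inE => ? -> _; exists c. Qed.

Lemma mem_charged x c : c \notin S -> e c x ->
  (C c == C u) ==> (x == x1) -> (C c == C v) ==> (x == x2) -> C c \in charged x.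
Proof. by move=> cS cx cu cv; rewrite inE cu cv imset_f // !inE cS e_sym. Qed.

Lemma component_charged K :
  K \in [set C y | y in ~: S] -> exists2 x, x \in S & K \in charged x.
Proof.
case/imsetP => y; rewrite in_setC => yS ->.
have [-> | Cy_u] := eqVneq (C y) (C u).
  exists x1 => //; rewrite -Ca; apply: mem_charged;
    by rewrite ?Ca ?eqxx ?(negbTE Cu_neq_Cv) ?(component_notin a_Cu).
have [-> | Cy_v] := eqVneq (C y) (C v).
  exists x2 => //; rewrite -Cb; apply: mem_charged;
    by rewrite ?Cb ?eqxx 1?eq_sym ?(negbTE Cu_neq_Cv) ?(component_notin b_Cv).
have [p y_p x1_last] := connectP (e_connected y x1).
have x1_Cy : last y p \notin C y by rewrite -x1_last; apply: contraTN x1S; apply: component_notin.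
have [p1 [z [p2 [_ p1_Cy z_Cy cz]]]] :=
  @path_exit _ _ (fun z => z \in C y) _ _ y_p (component_refl _ yS) x1_Cy.
have c_Cy : last y p1 \in C y by apply: (allP p1_Cy); apply: mem_last.
have Cc : C (last y p1) = C y := component_eq h_sym c_Cy.
have zS : z \in S.
  apply: contraT => zS.
  have : C (last y p1) != C z.
    by rewrite Cc; apply: contraNneq z_Cy => ->; apply: component_refl.
  case/(component_del_edge_adj e_sym (component_notin c_Cy) zS cz)/orP.
  - by case/andP => /eqP c_u _; rewrite -Cc c_u eqxx in Cy_u.
  - by case/andP => /eqP c_v _; rewrite -Cc c_v eqxx in Cy_v.
exists z => //; rewrite -Cc; apply: mem_charged;
  by rewrite ?Cc ?(negbTE Cy_u) ?(negbTE Cy_v) ?(component_notin c_Cy).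
Qed.

Lemma shared_charge_nbr_component c :
  x1 = x2 -> c \notin S -> e x1 c -> (C c == C u) || (C c == C v).
Proof.
move=> x12 cS x1c; apply: contraT; rewrite negb_or => /andP[Cc_u Cc_v].
have x1a : e x1 a by rewrite e_sym.
have x1b : e x1 b by rewrite x12 e_sym.
have Cab : C a != C b by rewrite Ca Cb.
have Cac : C a != C c by rewrite Ca eq_sym.
have Cbc : C b != C c by rewrite Cb eq_sym.
case/or3P: (claw_free_components e_sym e_claw_free (component_notin a_Cu)
  (component_notin b_Cv) cS x1a x1b x1c Cab Cac Cbc).
- case/orP => /andP[/eqP a_u /eqP b_v]; first by case: (not_charged_through_uv x12 a_u b_v).
  by move: Cu_neq_Cv; rewrite -Ca a_u eqxx.
- by case/orP => /andP[_ /eqP c_uv]; rewrite c_uv eqxx in Cc_u Cc_v.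
- by case/orP => /andP[_ /eqP c_uv]; rewrite c_uv eqxx in Cc_u Cc_v.
Qed.

Lemma card_charged x : #|charged x| <= 2.
Proof.
have [/andP[/eqP-> /eqP x12] | not_twice] := boolP ((x == x1) && (x == x2)).
  apply: (@leq_trans #|[set C u; C v]|); last by rewrite cards2 ltnS leq_b1.
  apply/subset_leq_card/subsetP => _ /charged_nbr[c /andP[cS x1c] ->].
  by rewrite !inE; apply: shared_charge_nbr_component.
have pair_charged c c' : C c \in charged x -> C c' \in charged x -> ~~ same_edge u v c c'.
  move=> cx c'x; apply: contra not_twice.
  case/orP => /andP[/eqP c_u /eqP c'_v]; move: cx c'x; rewrite c_u c'_v !inE !eqxx /=.
    by move=> /and3P[_ -> _] /and3P[_ _ ->].
  by move=> /and3P[_ _ ->] /and3P[_ -> _].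
rewrite leqNgt; apply/negP => /card_gt2P[K1 [K2 [K3 [[K1x K2x K3x] [n12 n23 n31]]]]].
have [c1 /andP[S1 xc1] K1_eq] := charged_nbr K1x.
have [c2 /andP[S2 xc2] K2_eq] := charged_nbr K2x.
have [c3 /andP[S3 xc3] K3_eq] := charged_nbr K3x.
subst K1 K2 K3; rewrite eq_sym in n31.
case/or3P: (claw_free_components e_sym e_claw_free S1 S2 S3 xc1 xc2 xc3 n12 n31 n23);
  by apply/negP; apply: pair_charged.
Qed.

Lemma ncomp_del_edge_le : ncomp (del_edge e u v) S <= 2 * #|S|.
Proof.
have cover : [set C y | y in ~: S] \subset \bigcup_(x in S) charged x.
  by apply/subsetP => K /component_charged[x xS Kx]; apply/bigcupP; exists x.
rewrite ncompE (leq_trans (subset_leq_card cover)) // (leq_trans (card_bigcup_le _ _)) //.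
by rewrite mulnC -sum_nat_const leq_sum // => x _; apply: card_charged.
Qed.

End DeficientCut.

Lemma ncomp_del_cycle_edge_le (T : finType) (e : rel T) u v p (S : {set T}) :
  symmetric e -> claw_free e -> (forall x y, connect e x y) ->
  uniq [:: u, v & p] -> path e v (rcons p u) -> 1 < size p ->
  u \notin S -> v \notin S -> ~~ connect (del_vertices (del_edge e u v) S) u v ->
  ncomp (del_edge e u v) S <= 2 * #|S|.
Proof.
move=> e_sym e_claw_free e_connected uvp_uniq v_path p_size uS vS u_v_apart.
have [[u_v u_p] [v_p p_uniq]] : (u != v /\ u \notin p) /\ (v \notin p /\ uniq p).
  by move: uvp_uniq => /and3P[]; rewrite in_cons negb_or => /andP[? ?] ? ?.
have p_nil : p != [::] by rewrite -size_eq0 -lt0n ltnW.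
have h_sym := del_edge_sym u v e_sym.
set C := component (del_edge e u v) S.
have Cu_neq_Cv : C u != C v.
  apply: contraNneq u_v_apart => Cuv.
  have : v \in C v := component_refl _ vS.
  by rewrite -Cuv mem_component => /andP[].
have u_Cv : u \notin C v by apply: contra Cu_neq_Cv => /(component_eq h_sym); rewrite /C => ->.
have v_Cu : v \notin C u by apply: contra Cu_neq_Cv => /(component_eq h_sym); rewrite /C => <-.
have vu_edge : same_edge u v v u by rewrite /same_edge !eqxx orbT.
have uv_edge : same_edge u v u v by rewrite /same_edge !eqxx.
have [x2 [b [x2S b_Cv b_x2 b_v]]] :=
  path_leaves_through v_path u_v u_p v_p p_nil (component_refl _ vS) u_Cv
    (fun b z => component_boundary e_sym vu_edge).
have v_u : v != u by rewrite eq_sym.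
have [v_rp u_rp] : v \notin rev p /\ u \notin rev p by rewrite !mem_rev.
have rp_nil : rev p != [::] by rewrite -size_eq0 size_rev -lt0n ltnW.
have [x1 [a [x1S a_Cu a_x1 a_u]]] :=
  path_leaves_through (path_rcons_rev e_sym v_path) v_u v_rp u_rp rp_nil
    (component_refl _ uS) v_Cu (fun a z => component_boundary e_sym uv_edge).
apply: (ncomp_del_edge_le e_sym e_claw_free e_connected Cu_neq_Cv
  x1S a_Cu a_x1 x2S b_Cv b_x2) => x12 /a_u x1_last /b_v x2_head.
by move: (uniq_head_neq_last u v p_uniq p_size); rewrite -head_rev -x2_head -x1_last x12 eqxx.
Qed.

Theorem mainTheorem11 (T : finType) (e : rel T) :
  simple_graph e -> claw_free e -> minimally_tough e (1 / 2)%R ->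
  forall s : seq T, is_graph_cycle e s -> size s = 3.
Proof.
move=> [e_sym _] e_claw_free e_minimal s /and3P[s3 s_uniq s_cycle].
have [[_ [e_tough _]] _] := e_minimal.
apply/eqP; rewrite eqn_leq s3 andbT leqNgt; apply/negP => s4.
case: s s3 s4 s_uniq s_cycle => [|u [|v p]] // _ p_size s_uniq /andP[uv v_path].
have [S S_cut S_big] := not_tough_half_cutset (minimally_tough_del_edge e_minimal uv).
have e_half := proj1 (tough_halfP e) e_tough.
have [uv_joined | ] := boolP [|| u \in S, v \in S | connect (del_vertices (del_edge e u v) S) u v].
  move: S_cut S_big; rewrite /cutset (ncomp_del_edge e_sym uv_joined) => S_cut.
  by rewrite ltnNge e_half.
rewrite !negb_or => /and3P[uS vS u_v_apart].
have half_gt0 : (0 < 1 / 2 :> rat)%R by lra.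
have e_connected := tough_connected half_gt0 e_tough.
by rewrite ltnNge (ncomp_del_cycle_edge_le e_sym e_claw_free e_connected
  s_uniq v_path p_size uS vS u_v_apart) in S_big.
Qed.
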